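(* Let $f\colon I\to I$ be continuous and $k\ge1$, and assume $\mathrm{Per}(f,k)$ is a Cantor set. Fix $x\in\mathrm{Per}(f,k)$ and $\varepsilon>0$, and let $\mu_x$ be the unique $f$-invariant Borel probability measure supported on the orbit of $x$. Then there is a non-atomic Borel probability measure $\nu$ supported on $\mathrm{Per}(f,k)$ such that $D(\mu_x,\nu)<\varepsilon$.
   Context: $I=[0,1]$. $\mathrm{Per}(f,k)=\{x: f^k(x)=x,\ f^i(x)\ne x,\ 1\le i<k\}$. For $A\subset I$, $B(A,\varepsilon)=\{y\in I: |y-a|<\varepsilon \text{ for some } a\in A\}$. The Prohorov metric on Borel probability measures on $I$ is $D(\mu,\nu)=\inf\{\varepsilon>0: \mu(A)\le\nu(B(A,\varepsilon))+\varepsilon \text{ and } \nu(A)\le\mu(B(A,\varepsilon))+\varepsilon \text{ for all Borel } A\subset I\}$. A Cantor set is a nonempty compact, perfect, totally disconnected set. *)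

From HB Require Import structures.
From mathcomp Require Import all_boot all_order all_algebra.
From mathcomp Require Import all_classical all_reals all_analysis.
Set Implicit Arguments. Unset Strict Implicit. Unset Printing Implicit Defensive.
Import Order.TTheory GRing.Theory Num.Theory.
Import numFieldNormedType.Exports.
Local Open Scope classical_set_scope.
Local Open Scope ring_scope.

(* I = [0,1] is the set `[0, 1] of R.  Borel probability measures on I are
   represented as probability measures on (the Borel sigma-algebra of) R
   whose support lies in I. *)

Definition unitI {R : realType} : set R := `[0, 1]%classic.

Definition Per {R : realType} (f : R -> R) (k : nat) : set R :=
  [set x | unitI x /\ iter k f x = x /\
           (forall i : nat, (1 <= i)%N -> (i < k)%N -> iter i f x <> x)].

Definition cantor_set {R : realType} (C : set R) : Prop :=
  [/\ C !=set0, compact C, perfect_set C & totally_disconnected C].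

Definition orbit_of {R : realType} (f : R -> R) (x : R) : set R :=
  [set iter i f x | i in [set: nat]].

Definition msupport {R : realType} (mu : set R -> \bar R) : set R :=
  [set y | forall e : R, 0 < e -> (0 < mu (ball y e))%E].

Definition f_invariant {R : realType} (f : R -> R) (mu : set R -> \bar R) :=
  forall A : set R, measurable A -> A `<=` unitI ->
    mu (unitI `&` f @^-1` A) = mu A.

Definition nonatomic {R : realType} (mu : set R -> \bar R) :=
  forall y : R, mu [set y] = 0%E.

Definition Bnbhd {R : realType} (A : set R) (e : R) : set R :=
  [set y | unitI y /\ exists2 a, A a & `|y - a| < e].

Definition prohorov_ok {R : realType} (mu nu : set R -> \bar R) (e : R) :=
  forall A : set R, measurable A -> A `<=` unitI ->
    (mu A <= nu (Bnbhd A e) + e%:E)%E /\ (nu A <= mu (Bnbhd A e) + e%:E)%E.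

Definition prohorov {R : realType} (mu nu : set R -> \bar R) : \bar R :=
  ereal_inf [set e%:E | e in [set e : R | 0 < e /\ prohorov_ok mu nu e]].

From HB Require Import structures.
From mathcomp Require Import all_boot all_order all_algebra.
From mathcomp Require Import all_classical all_reals all_analysis.
From mathcomp Require Import lra zify.
Import Order.TTheory GRing.Theory Num.Theory.
Import numFieldNormedType.Exports.
Local Open Scope classical_set_scope.
Local Open Scope ring_scope.

(* mu_x is supported on the orbit of x, whose points a_j = f^j(x), j < k, are
   distinct, so mu_x is the sum of the point masses w_j = mu_x({a_j}).  Since
   Per(f,k) is closed without isolated points, a Cantor scheme of nested
   intervals centred in Per(f,k) yields for each j a nondecreasing map g_j,
   strictly increasing on [0,1], with values in Per(f,k) within eps/4 of a_j.
   Then nu = sum_j w_j (g_j)_* (Lebesgue measure on [0,1]) is a probability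
   without atoms supported on Per(f,k), obtained from mu_x by moving each atom
   by less than eps/2, so D(mu_x, nu) <= eps/2. *)

Section dyadic_index.
Context {R : realType}.

Lemma exists_lt_pow2 (x : R) : exists n, x < 2 ^+ n.
Proof.
exists (Num.truncn x); apply: (lt_le_trans (truncnS_gt x)).
by rewrite -natrX ler_nat ltn_expl.
Qed.

Lemma truncn_mul2_half (y : R) : (Num.truncn (y * 2))./2 = Num.truncn y.
Proof.
have truncn_lt1 (z : R) : z < 1 -> Num.truncn z = 0%N.
  by move=> z_lt1; apply/truncn0Pn; rewrite -ltNge.
have [y_ge0|y_lt0] := leP 0 y; last by rewrite !truncn_lt1 //; lra.
have y2_ge0 : 0 <= y * 2 by lra.
have := truncn_itv y_ge0; have := truncn_itv y2_ge0.
set m := Num.truncn y; set m2 := Num.truncn (y * 2).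
rewrite -[m.+1%:R]natr1 -[m2.+1%:R]natr1 => /andP[le_m2 lt_m2] /andP[le_m lt_m].
have lb : (m * 2 <= m2)%N by rewrite truncn_ge_nat // natrM; lra.
have ub : (m2 < m * 2 + 2)%N by rewrite truncn_lt_nat // natrD natrM; lra.
rewrite -divn2; lia.
Qed.

(* For t in [0, 1), the m with m / 2 ^ n <= t < (m + 1) / 2 ^ n; it is 0 for
   t < 0 and 2 ^ n - 1 for t >= 1. *)
Definition dyadic_idx (n : nat) (t : R) : nat :=
  minn (Num.truncn (t * 2 ^+ n)) (2 ^ n).-1.

Lemma dyadic_idx_lt n t : (dyadic_idx n t < 2 ^ n)%N.
Proof. by rewrite /dyadic_idx; have := expn_gt0 2 n; lia. Qed.

Lemma dyadic_idx_half n t : (dyadic_idx n.+1 t)./2 = dyadic_idx n t.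
Proof.
rewrite /dyadic_idx exprSr mulrA -(truncn_mul2_half (t * 2 ^+ n)) expnSr.
have : (0 < 2 ^ n)%N by rewrite expn_gt0.
move: (2 ^ n)%N (Num.truncn _) => P m P_gt0.
rewrite -!divn2; lia.
Qed.

Lemma dyadic_idx_mono n : {homo dyadic_idx n : t t' / t <= t' >-> (t <= t')%N}.
Proof.
move=> t t' le_tt'; rewrite /dyadic_idx.
have : (Num.truncn (t * 2 ^+ n) <= Num.truncn (t' * 2 ^+ n))%N.
  by apply: le_truncn; rewrite ler_wpM2r // exprn_ge0.
lia.
Qed.

Lemma dyadic_idx_sep {t t'} : 0 <= t -> t < t' -> t' <= 1 ->
  exists n, (dyadic_idx n t < dyadic_idx n t')%N.
Proof.
move=> t_ge0 lt_tt' t'_le1.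
have [n ltn] := exists_lt_pow2 (t' - t)^-1.
have pow_gt0 : 0 < 2 ^+ n :> R by rewrite exprn_gt0.
have gap : t * 2 ^+ n + 1 < t' * 2 ^+ n.
  by move: ltn; rewrite -div1r ltr_pdivrMr ?subr_gt0 // mulrBr; lra.
exists n; rewrite /dyadic_idx.
have := truncn_itv (mulr_ge0 t_ge0 (ltW pow_gt0)).
have := truncn_itv (mulr_ge0 (le_trans t_ge0 (ltW lt_tt')) (ltW pow_gt0)).
have : t' * 2 ^+ n <= 2 ^+ n by rewrite ler_piMl // ltW.
set m := Num.truncn (t * _); set m' := Num.truncn (t' * _).
rewrite -[m.+1%:R]natr1 -[m'.+1%:R]natr1 => le_pow /andP[le_m' lt_m'] /andP[le_m lt_m].
have : (m < m')%N by rewrite -(ltr_nat R); lra.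
have : (m.+1 < 2 ^ n)%N by rewrite -(ltr_nat R) natrX; lra.
have := expn_gt0 2 n; lia.
Qed.

End dyadic_index.

Section perfect_embedding.
Context {R : realType} {C : set R}.
Hypothesis C_limit : C `<=` limit_point C.

Lemma limit_point_near {c e} : C c -> 0 < e ->
  exists c', [/\ C c', c' != c & `|c' - c| < e].
Proof.
move=> /C_limit /(_ (ball c e) (nbhsx_ballx c e _)) lim_c e_gt0.
have [c' [ne Cc' ball_c']] := lim_c e_gt0.
by exists c'; split => //; rewrite -ball_normE /ball_ /= distrC in ball_c'.
Qed.

Definition split_point (c r : R) : R :=
  xget c [set c' | [/\ C c', c' != c & `|c' - c| < r / 2]].

Lemma split_pointP {c r} : C c -> 0 < r ->
  [/\ C (split_point c r), split_point c r != c & `|split_point c r - c| < r / 2].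
Proof.
move=> Cc r_gt0; have r2_gt0 : 0 < r / 2 by rewrite divr_gt0.
exact: xgetPex (limit_point_near Cc r2_gt0).
Qed.

Definition lo (p : R * R) : R := p.1 - p.2.
Definition hi (p : R * R) : R := p.1 + p.2.

Definition child (b : bool) (p : R * R) : R * R :=
  let c' := split_point p.1 p.2 in
  (if b then Num.max p.1 c' else Num.min p.1 c',
   (Num.max p.1 c' - Num.min p.1 c') / 3).

Lemma child_spec b {p} : C p.1 -> 0 < p.2 ->
  [/\ C (child b p).1, 0 < (child b p).2, (child b p).2 <= p.2 / 2,
      lo p < lo (child b p) & hi (child b p) < hi p].
Proof.
case: p => c r /= Cc r_gt0; rewrite /child /lo /hi /=.
have [Cc' ne] := split_pointP Cc r_gt0; set c' := split_point c r.
rewrite ltr_norml => /andP[near_l near_r].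
have [le_cc'|lt_c'c] := leP c c'; last by case: b; split => //=; lra.
have lt_cc' : c < c' by rewrite lt_neqAle eq_sym ne.
by case: b; split => //=; lra.
Qed.

Lemma child_sep {p} : C p.1 -> 0 < p.2 -> hi (child false p) < lo (child true p).
Proof.
case: p => c r /= Cc r_gt0; rewrite /child /lo /hi /=.
have [_ ne _] := split_pointP Cc r_gt0; set c' := split_point c r.
have [le_cc'|lt_c'c] := leP c c'; last by lra.
have lt_cc' : c < c' by rewrite lt_neqAle eq_sym ne.
lra.
Qed.

Context {c0 r0 : R}.
Hypotheses (C_c0 : C c0) (r0_gt0 : 0 < r0).

(* A pair (c, r) stands for the interval [c - r, c + r] centred at a point c
   of C; for m < 2 ^ n, node n m is the m-th from the left of the 2 ^ n
   disjoint intervals of generation n. *)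
Fixpoint node (n m : nat) : R * R :=
  if n is n'.+1 then child (odd m) (node n' m./2) else (c0, r0).

Lemma node_spec n m : C (node n m).1 /\ 0 < (node n m).2.
Proof.
elim: n m => [|n IH] m //=.
by have [Cc r_gt0] := IH m./2; have [] := child_spec (odd m) Cc r_gt0.
Qed.

Lemma lo_lt_hi_node n m : lo (node n m) < hi (node n m).
Proof. by have [_ r_gt0] := node_spec n m; rewrite /lo /hi; lra. Qed.

Lemma node_radius_le n m : (node n m).2 <= r0 / 2 ^+ n.
Proof.
elim: n m => [|n IH] m /=; first by rewrite expr0 divr1.
have [Cc r_gt0] := node_spec n m./2.
have [_ _ le_half _ _] := child_spec (odd m) Cc r_gt0.
by apply: (le_trans le_half); rewrite exprSr invfM mulrA ler_pM2r.
Qed.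

Lemma node_nested n m :
  lo (node n m./2) < lo (node n.+1 m) /\ hi (node n.+1 m) < hi (node n m./2).
Proof.
have [Cc r_gt0] := node_spec n m./2.
by have [_ _ _ ] := child_spec (odd m) Cc r_gt0.
Qed.

Lemma node_sep {n m m'} : (m < m')%N -> (m' < 2 ^ n)%N ->
  hi (node n m) < lo (node n m').
Proof.
elim: n m m' => [|n IH] m m' lt_mm' lt_m'; first by rewrite expn0 in lt_m'; lia.
have lt_half' : (m'./2 < 2 ^ n)%N by rewrite -divn2 ltn_divLR // -expnSr.
have [lt_half|eq_half] : (m./2 < m'./2)%N \/ m./2 = m'./2 by rewrite -!divn2; lia.
  have := IH _ _ lt_half lt_half'.
  by have [_ ?] := node_nested n m; have [? _] := node_nested n m'; lra.
have [odd_m odd_m'] : odd m = false /\ odd m' = true.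
  move: lt_mm' eq_half (odd_double_half m) (odd_double_half m').
  by case: (odd m); case: (odd m') => /=; rewrite -!muln2; lia.
have [Cc r_gt0] := node_spec n m./2.
by rewrite /= odd_m odd_m' -eq_half; apply: child_sep.
Qed.

Lemma lo_node_mono n m m' : (m <= m')%N -> (m' < 2 ^ n)%N ->
  lo (node n m) <= lo (node n m').
Proof.
rewrite leq_eqVlt => /predU1P[-> //|lt_mm' lt_m'].
by have := node_sep lt_mm' lt_m'; have := lo_lt_hi_node n m; lra.
Qed.

Definition branch (t : R) (n : nat) : R * R := node n (dyadic_idx n t).

Lemma branch_nested t {n N} : (n <= N)%N ->
  lo (branch t n) <= lo (branch t N) /\ hi (branch t N) <= hi (branch t n).
Proof.
elim: N => [|N IH]; first by rewrite leqn0 => /eqP ->.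
rewrite leq_eqVlt => /predU1P[-> //|]; rewrite ltnS => /IH[lo_le hi_le].
have [lo_lt hi_lt] := node_nested N (dyadic_idx N.+1 t).
by rewrite dyadic_idx_half in lo_lt hi_lt; rewrite /branch; lra.
Qed.

Lemma lo_branch_le_hi t n N : lo (branch t N) <= hi (branch t n).
Proof.
have [le_nN|lt_Nn] := leqP n N.
  have [_ ?] := branch_nested t le_nN; have := lo_lt_hi_node N (dyadic_idx N t).
  rewrite /branch; lra.
have [? _] := branch_nested t (ltnW lt_Nn); have := lo_lt_hi_node n (dyadic_idx n t).
rewrite /branch; lra.
Qed.

Definition perfect_embedding (t : R) : R := sup (range (lo \o branch t)).

Lemma perfect_embedding_bounds t n :
  lo (branch t n) <= perfect_embedding t <= hi (branch t n).
Proof.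
apply/andP; split.
  apply: ub_le_sup; last by exists n.
  by exists (hi (branch t 0)) => _ [N _ <-]; apply: lo_branch_le_hi.
apply: ge_sup; first by exists (lo (branch t 0)), 0%N.
by move=> _ [N _ <-]; apply: lo_branch_le_hi.
Qed.

Lemma perfect_embedding_nondecreasing :
  {homo perfect_embedding : t t' / t <= t'}.
Proof.
move=> t t' le_tt'; apply: ge_sup; first by exists (lo (branch t 0)), 0%N.
move=> _ [n _ <-] /=; apply: le_trans (andP (perfect_embedding_bounds t' n)).1.
exact/lo_node_mono/dyadic_idx_lt/dyadic_idx_mono.
Qed.

Lemma perfect_embedding_lt {t t'} : 0 <= t -> t < t' -> t' <= 1 ->
  perfect_embedding t < perfect_embedding t'.
Proof.
move=> t_ge0 lt_tt' t'_le1; have [n lt_idx] := dyadic_idx_sep t_ge0 lt_tt' t'_le1.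
have := node_sep lt_idx (dyadic_idx_lt n t').
have /andP[_ ?] := perfect_embedding_bounds t n.
have /andP[? _] := perfect_embedding_bounds t' n.
rewrite /branch; lra.
Qed.

Lemma perfect_embedding_inj : {in `[0, 1] &, injective perfect_embedding}.
Proof.
move=> t t'; rewrite !in_itv /= => /andP[t_ge0 t_le1] /andP[t'_ge0 t'_le1] eq_tt'.
have [lt_tt'|lt_t't|//] := ltgtP t t'.
- by have := perfect_embedding_lt t_ge0 lt_tt' t'_le1; rewrite eq_tt' ltxx.
- by have := perfect_embedding_lt t'_ge0 lt_t't t_le1; rewrite eq_tt' ltxx.
Qed.

Lemma perfect_embedding_near t : `|perfect_embedding t - c0| <= r0.
Proof.
have /andP[] := perfect_embedding_bounds t 0; rewrite /branch /lo /hi /= => ? ?.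
by rewrite ler_norml; apply/andP; split; lra.
Qed.

Lemma perfect_embedding_in t : closed C -> C (perfect_embedding t).
Proof.
move=> /closure_id -> U /nbhs_ballP[e /= e_gt0 sub_U].
have [n lt_pow] := exists_lt_pow2 (r0 / e).
have small : r0 / 2 ^+ n < e.
  by rewrite ltr_pdivrMr ?exprn_gt0 // mulrC -ltr_pdivrMr.
have [Cc _] := node_spec n (dyadic_idx n t).
exists (branch t n).1; split => //; apply: sub_U.
have := node_radius_le n (dyadic_idx n t).
have /andP[] := perfect_embedding_bounds t n.
rewrite -ball_normE /ball_ /= /branch /lo /hi ltr_norml => ? ? ?.
by apply/andP; split; lra.
Qed.

End perfect_embedding.
Arguments perfect_embedding {R} C c0 r0 t.

Section support.
Context {R : realType}.

Definition rat_ball (p : int * nat) : set R :=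
  ball (p.1%:~R / p.2.+1%:R : R) p.2.+1%:R^-1.

Lemma rat_ball_sub (y : R) {e : R} : 0 < e ->
  exists p, rat_ball p y /\ rat_ball p `<=` ball y e.
Proof.
move=> e_gt0; pose m := Num.truncn (2 / e); pose z := Num.floor (y * m.+1%:R).
have m_gt0 : 0 < m.+1%:R :> R by rewrite ltr0n.
have rad_lt : 2 * m.+1%:R^-1 < e.
  have := truncnS_gt (2 / e); rewrite -/m ltr_pdivrMr // => lt2.
  by rewrite ltr_pdivrMr // mulrC.
have /andP[z_le z_gt] := floor_itv (y * m.+1%:R).
have y_near : `|y - z%:~R / m.+1%:R| < m.+1%:R^-1.
  have le_y : z%:~R / m.+1%:R <= y by rewrite ler_pdivrMr.
  have : y < (z%:~R + 1) / m.+1%:R by rewrite ltr_pdivlMr // -intrD1.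
  by rewrite mulrDl mul1r ger0_norm ?subr_ge0 // ltrBlDl.
have y_in : rat_ball (z, m) y by rewrite /rat_ball -ball_normE /ball_ /= distrC.
exists (z, m); split => // u /(ball_triangle (ball_sym y_in)).
by apply: le_ball => /=; rewrite mulr_natl mulr2n in rad_lt; exact: ltW.
Qed.

Lemma msupport_null (mu : {measure set R -> \bar R}) (S : set R) :
  measurable S -> S `<=` ~` msupport mu -> mu S = 0%E.
Proof.
move=> mS S_out.
pose F n : set R := if unpickle n is Some p then
  (if mu (rat_ball p) == 0%E then rat_ball p else set0) else set0.
have mF n : measurable (F n).
  rewrite /F; case: unpickle => [p|] //; case: ifP => // _.
  exact: measurable_realfun.measurable_ball.
have F_null n : mu (F n) = 0%E.
  by rewrite /F; case: unpickle => [p|]; [case: ifP => [/eqP //|_] |]; exact: measure0.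
have S_cover : S `<=` \bigcup_n F n.
  move=> y /S_out /existsNP[e /not_implyP[e_gt0 /negP]].
  rewrite -leNgt measure_le0 => /eqP null_ball.
  have [p [yp sub]] := rat_ball_sub y e_gt0.
  have null_p : mu (rat_ball p) = 0%E.
    apply/eqP; rewrite -measure_le0 -null_ball.
    by rewrite le_measure ?inE //; exact: measurable_realfun.measurable_ball.
  by exists (pickle p) => //; rewrite /F pickleK null_p eqxx.
apply/eqP; rewrite -measure_le0.
apply: le_trans (measure_sigma_subadditive mu mF mS S_cover) _.
by rewrite eseries0.
Qed.

Lemma measure_finite_support {mu : {measure set R -> \bar R}} {k} {a : nat -> R} :
  injective (fun j : 'I_k => a j) -> msupport mu `<=` a @` `I_k ->
  forall S, measurable S -> mu S = (\sum_(j < k) mu (S `&` [set a j]))%E.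
Proof.
move=> a_inj supp S mS.
have mO : measurable (\bigcup_(j < k) [set a j]).
  by apply: bigcup_measurable => j _; exact: measurable_set1.
have outside_null : mu (S `\` \bigcup_(j < k) [set a j]) = 0%E.
  apply: msupport_null; first exact: measurableD.
  by move=> y [_ notO] /supp [j kj aj]; apply: notO; exists j.
(* measureDI is stated for contents: outside_null matches only up to conversion. *)
rewrite (measureDI mu mS mO) [X in (X + _)%E](_ : _ = 0%E) ?add0e; last first.
  exact: outside_null.
rewrite setI_bigcupr bigcup_mkord measure_bigsetU_ord //.
  by move=> j; apply: measurableI => //; exact: measurable_set1.
move=> i j _ _ [y [[_ yi] [_ yj]]]; apply: a_inj.
by rewrite /= in yi yj; rewrite -yi -yj.
Qed.

End support.

Section periodic_orbit.
Context {R : realType} {f : R -> R} {k : nat} {x : R}.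
Hypothesis Px : Per f k x.

Lemma iter_mod_period n : iter n f x = iter (n %% k) f x.
Proof.
have iter_mul q : iter (q * k) f x = x.
  by elim: q => //= q IH; rewrite mulSn iterD IH; case: Px => _ [].
by rewrite {1}(divn_eq n k) addnC iterD iter_mul.
Qed.

Hypothesis f_unit : forall y, unitI y -> unitI (f y).

Lemma Per_iter j : Per f k (iter j f x).
Proof.
have [x_unit [x_per minimal]] := Px.
split; first by elim: j => //= j; exact: f_unit.
split; first by rewrite -iterD addnC iterD x_per.
move=> i i_gt0 lt_ik per_i; apply: (minimal i i_gt0 lt_ik).
have back : iter (k.-1 * j) f (iter j f x) = x.
  have k_gt0 : (0 < k)%N := ltn_trans i_gt0 lt_ik.
  by rewrite -iterD addnC -mulSn prednK // iter_mod_period modnMr.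
by rewrite -{1}back -iterD addnC iterD per_i back.
Qed.

Lemma iter_period_inj : injective (fun j : 'I_k => iter j f x).
Proof.
suff lt_neq (i j : nat) : (i < j < k)%N -> iter i f x <> iter j f x.
  move=> i j /= eq_ij; apply/val_inj; have [lt_ij|lt_ji|//] := ltngtP i j.
  - by case: (lt_neq i j); rewrite ?lt_ij ?ltn_ord.
  - by case: (lt_neq j i); rewrite ?lt_ji ?ltn_ord.
move=> /andP[lt_ij lt_jk] eq_ij; have [_ [_ minimal]] := Per_iter i.
apply: (minimal (j - i)%N); first by rewrite subn_gt0.
  exact: leq_ltn_trans (leq_subr _ _) lt_jk.
by rewrite -iterD subnK 1?ltnW.
Qed.

Lemma orbit_sub_iter_period :
  (0 < k)%N -> orbit_of f x `<=` (fun j => iter j f x) @` `I_k.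
Proof.
move=> k_gt0 _ [n _ <-]; exists (n %% k)%N; last by rewrite -iter_mod_period.
by rewrite /= ltn_pmod.
Qed.

End periodic_orbit.

Section uniform_pushforward.
Context {R : realType}.

Definition lebesgue01 : {measure set (measurableTypeR R) -> \bar R} :=
  mrestr lebesgue_measure (measurable_itv `[0%R, 1%R]).

Variables (g : measurableTypeR R -> R) (mg : measurable_fun setT g).

(* The library's pushforward measure needs the measurability proof [mg] as an
   argument, so it is not found by canonical inference; it is named here. *)
Definition unif_push : {measure set R -> \bar R} :=
  measure_function_pushforward__canonical__measure_function_Measure lebesgue01 mg.

Lemma unif_push_range A : range g `<=` A -> unif_push A = 1%E.
Proof.
move=> gA; rewrite /= /pushforward /= /mrestr.
have -> : g @^-1` A = setT by apply/seteqP; split => // t _; apply: gA; exists t.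
by rewrite setTI lebesgue_measure_itv /= lte_fin ltr01 oppr0 adde0.
Qed.

Lemma unif_push_out A : (forall t, ~ A (g t)) -> unif_push A = 0%E.
Proof.
move=> gA; rewrite /= /pushforward /= /mrestr.
have -> : g @^-1` A = set0 by apply/seteqP; split => // t /gA.
by rewrite set0I measure0.
Qed.

Lemma unif_push_le1 A : measurable A -> (unif_push A <= 1)%E.
Proof.
by move=> mA; rewrite -(@unif_push_range setT) ?le_measure ?inE.
Qed.

Lemma unif_push_set1 y : {in `[0, 1] &, injective g} -> unif_push [set y] = 0%E.
Proof.
move=> g_inj; rewrite /= /pushforward /= /mrestr.
have [[t0 [gt0 t0_01]]|none] := pselect (exists t, (g @^-1` [set y] `&` `[0, 1]) t).
  apply/eqP; rewrite -measure_le0 -(lebesgue_measure_set1 t0) le_measure ?inE //.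
  - by apply: measurableI => //; rewrite -[X in measurable X]setTI; exact: mg.
  - by move=> t [gt t_01]; apply: g_inj; rewrite ?inE //= gt gt0.
rewrite (_ : _ `&` _ = set0) ?measure0 //.
by apply/seteqP; split => // t ?; apply: none; exists t.
Qed.

End uniform_pushforward.
Arguments unif_push {R g}.

Lemma measurable_Bnbhd {R : realType} (A : set R) (e : R) : measurable (Bnbhd A e).
Proof.
have -> : Bnbhd A e = unitI `&` \bigcup_(x in A) ball x e.
  apply/seteqP; split => y [y_unit [x Ax near_xy]]; split => //; exists x => //;
    by rewrite -ball_normE /ball_ /= distrC in near_xy *.
apply: measurableI; first exact: measurable_itv.
apply: measurable_realfun.open_measurable.
by apply: bigcup_open => x _; exact: ball_open.
Qed.

Section spread.
Context {R : realType} (mu : {finite_measure set R -> \bar R}).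
Context (k : nat) (a : nat -> R) (g : nat -> measurableTypeR R -> R).
Context (mg : forall j, measurable_fun setT (g j)).

Definition atom_weight j : {nonneg R} :=
  NngNum (fine_ge0 (measure_ge0 mu [set a j])).

Lemma atom_weightE j : ((atom_weight j)%:num)%:E = mu [set a j].
Proof. by rewrite fineK // fin_num_measure. Qed.

Definition spread : {measure set R -> \bar R} :=
  msum (fun j => mscale (atom_weight j) (unif_push (mg j))) k.

Lemma spread_set1 y : (forall j, {in `[0, 1] &, injective (g j)}) ->
  spread [set y] = 0%E.
Proof.
move=> g_inj; rewrite /= /msum big1 // => j _.
by rewrite /= /mscale unif_push_set1 ?mule0.
Qed.

Lemma msupport_spread {C : set R} : closed C -> (forall j t, C (g j t)) ->
  msupport spread `<=` C.
Proof.
move=> /closure_id C_closure gC y y_supp.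
rewrite C_closure => B /nbhs_ballP[e /= e_gt0 sub_B].
apply: contrapT => noC; move: (y_supp e e_gt0); apply/negP; rewrite -leNgt.
rewrite /= /msum big1 // => j _; rewrite /= /mscale unif_push_out ?mule0 // => t gt.
by apply: noC; exists (g j t); split; [exact: gC | exact: sub_B].
Qed.

Hypothesis mu_atoms :
  forall S, measurable S -> mu S = (\sum_(j < k) mu (S `&` [set a j]))%E.

Lemma spread_setT : spread setT = mu setT.
Proof.
rewrite mu_atoms //= /msum; apply: eq_bigr => j _.
by rewrite /= /mscale unif_push_range // mule1 atom_weightE setTI.
Qed.

Context {e : R}.
Hypotheses (a_unit : forall j, unitI (a j))
  (g_near : forall j t, unitI (g j t) /\ `|g j t - a j| < e).

Lemma le_spread_Bnbhd A : measurable A -> (mu A <= spread (Bnbhd A e))%E.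
Proof.
move=> mA; rewrite mu_atoms //= /msum; apply: lee_sum => j _.
have [Aaj|notAaj] := pselect (A (a j)).
  rewrite /= /mscale unif_push_range ?mule1 ?atom_weightE.
    by apply: le_measure; rewrite ?inE //; exact: measurableI.
  move=> _ [t _ <-]; have [g_unit near] := g_near j t.
  by split => //; exists (a j).
have -> : A `&` [set a j] = set0.
  by apply/seteqP; split => // y [Ay yE]; apply: notAaj; rewrite -yE.
by rewrite measure0 measure_ge0.
Qed.

Lemma spread_le_Bnbhd A : measurable A -> (spread A <= mu (Bnbhd A e))%E.
Proof.
move=> mA; rewrite (mu_atoms _ (measurable_Bnbhd A e)) /= /msum.
apply: lee_sum => j _.
have [Baj|notBaj] := pselect (Bnbhd A e (a j)).
  rewrite (_ : _ `&` _ = [set a j]); last by apply/seteqP; split => [y []|y ->].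
  rewrite -atom_weightE /= /mscale -[X in (_ <= X)%E]mule1.
  by rewrite lee_wpmul2l ?lee_fin // unif_push_le1.
rewrite /= /mscale unif_push_out ?mule0 ?measure_ge0 // => t At; apply: notBaj.
split => //; exists (g j t) => //; rewrite distrC; exact: (g_near j t).2.
Qed.

End spread.

Lemma prohorov_le {R : realType} (mu nu : set R -> \bar R) (e : R) : 0 < e ->
  (forall A, measurable A ->
    (mu A <= nu (Bnbhd A e))%E /\ (nu A <= mu (Bnbhd A e))%E) ->
  (prohorov mu nu <= e%:E)%E.
Proof.
move=> e_gt0 close; apply: ge_ereal_inf; exists e%:E => //; exists e => //.
split => // A mA _; have [muA nuA] := close A mA.
by split; [apply: le_trans muA _ | apply: le_trans nuA _]; rewrite leeDl // lee_fin ltW.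
Qed.

Lemma mnormalize_setT1 d (T : measurableType d) (R : realType)
    (mu : {measure set T -> \bar R}) (P : probability T R) :
  mu setT = 1%E -> mnormalize mu P = mu.
Proof.
by move=> mu1; apply/funext => A; rewrite /mnormalize mu1 onee_eq0 /= invr1 mule1.
Qed.

Theorem mainTheorem5 (R : realType) (f : R -> R) (k : nat) :
  {within unitI, continuous f} ->
  (forall y, unitI y -> unitI (f y)) ->
  (1 <= k)%N ->
  cantor_set (Per f k) ->
  forall x : R, Per f k x ->
  forall eps : R, 0 < eps ->
  forall mu_x : probability R R,
    f_invariant f mu_x -> msupport mu_x `<=` orbit_of f x ->
  exists nu : probability R R,
    [/\ nonatomic nu, msupport nu `<=` Per f k & (prohorov mu_x nu < eps%:E)%E].
Proof.
move=> _ f_unit k_gt0 [_ _ [Per_closed Per_perfect] _] x Px eps eps_gt0 mu _ mu_supp.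
have Per_limit : Per f k `<=` limit_point (Per f k) by rewrite Per_perfect.
have r_gt0 : 0 < eps / 4 by rewrite divr_gt0.
pose a j := iter j f x.
have Per_a j : Per f k (a j) := Per_iter Px f_unit j.
have a_unit j : unitI (a j) by have [] := Per_a j.
pose g j : measurableTypeR R -> R := perfect_embedding (Per f k) (a j) (eps / 4).
have g_Per j t : Per f k (g j t) :=
  perfect_embedding_in Per_limit (Per_a j) r_gt0 t Per_closed.
have g_near j t : unitI (g j t) /\ `|g j t - a j| < eps / 2.
  split; first by have [] := g_Per j t.
  by apply: le_lt_trans (perfect_embedding_near Per_limit (Per_a j) r_gt0 t) _; lra.
have mg j : measurable_fun setT (g j) :=
  measurable_realfun.nondecreasing_measurable measurableT
    (perfect_embedding_nondecreasing Per_limit (Per_a j) r_gt0).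
have mu_atoms := measure_finite_support (iter_period_inj Px f_unit)
  (subset_trans mu_supp (orbit_sub_iter_period Px k_gt0)).
(* mnormalize only serves to package spread, of total mass 1, as a probability. *)
have nuE : mnormalize (spread mu k a g mg) mu = spread mu k a g mg.
  by apply: mnormalize_setT1; rewrite spread_setT //; exact: probability_setT.
exists (mnormalize (spread mu k a g mg) mu); rewrite /= nuE; split.
- by move=> y; apply: spread_set1 => j; exact: perfect_embedding_inj.
- exact: (msupport_spread mu k a g mg Per_closed g_Per).
have nu_close : (prohorov mu (spread mu k a g mg) <= (eps / 2)%:E)%E.
  apply: prohorov_le => [|A mA]; first by rewrite divr_gt0.
  split; first exact: (le_spread_Bnbhd mu k a g mg mu_atoms g_near).
  exact: (spread_le_Bnbhd mu k a g mg mu_atoms a_unit g_near).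
by apply: le_lt_trans nu_close _; rewrite lte_fin; lra.
Qed.
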